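(* Let $B\in\mathbb R^{n\times m}$, $f:\mathbb R^m\to\mathbb R$, $h:\mathbb R^n\to\mathbb R$ differentiable, and $T_{\mathcal U},\mathcal I_{\mathcal V}$ ($m\times m$), $T_{\mathcal P},\mathcal I_{\mathcal Q}$ ($n\times n$) symmetric positive definite. Let $f_B(u)=f(u)+\frac12(B^\top T_{\mathcal P}^{-1}Bu,u)$, $h_B(p)=h(p)+\frac12(BT_{\mathcal U}^{-1}B^\top p,p)$, $e_{\mathcal U}(u)=u-T_{\mathcal U}^{-1}\nabla f(u)$, $e_{\mathcal P}(p)=p-T_{\mathcal P}^{-1}\nabla h(p)$, and $$\mathcal G^u(u,p)=-\mathcal I_{\mathcal V}^{-1}\big(\nabla f_B(u)+B^\top(p-T_{\mathcal P}^{-1}\nabla h(p))\big),\qquad \mathcal G^p(u,p)=-\mathcal I_{\mathcal Q}^{-1}\big(\nabla h_B(p)-B(u-T_{\mathcal U}^{-1}\nabla f(u))\big).$$ Assume $\nabla f_B$ and $\nabla h_B$ are Lipschitz with constants $L_{f_B,\mathcal I_{\mathcal V}}$, $L_{h_B,\mathcal I_{\mathcal Q}}$ (i.e. $\|\nabla f_B(u_1)-\nabla f_B(u_2)\|_{\mathcal I_{\mathcal V}^{-1}}\le L_{f_B,\mathcal I_{\mathcal V}}\|u_1-u_2\|_{\mathcal I_{\mathcal V}}$ and $\|\nabla h_B(p_1)-\nabla h_B(p_2)\|_{\mathcal I_{\mathcal Q}^{-1}}\le L_{h_B,\mathcal I_{\mathcal Q}}\|p_1-p_2\|_{\mathcal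 I_{\mathcal Q}}$), and let $L_{e_{\mathcal U},\mathcal I_{\mathcal V}}$, $L_{e_{\mathcal P},\mathcal I_{\mathcal Q}}$ be the Lipschitz constants of $e_{\mathcal U}$ in $\|\cdot\|_{\mathcal I_{\mathcal V}}$ and of $e_{\mathcal P}$ in $\|\cdot\|_{\mathcal I_{\mathcal Q}}$. Then for all $u_1,u_2\in\mathbb R^m$, $p_1,p_2\in\mathbb R^n$, $$\|\mathcal G^u(u_1,p_1)-\mathcal G^u(u_2,p_2)\|_{\mathcal I_{\mathcal V}}\le L_{f_B,\mathcal I_{\mathcal V}}\|u_1-u_2\|_{\mathcal I_{\mathcal V}}+L_SL_{e_{\mathcal P},\mathcal I_{\mathcal Q}}\|p_1-p_2\|_{\mathcal I_{\mathcal Q}},$$ $$\|\mathcal G^p(u_1,p_1)-\mathcal G^p(u_2,p_2)\|_{\mathcal I_{\mathcal Q}}\le L_{h_B,\mathcal I_{\mathcal Q}}\|p_1-p_2\|_{\mathcal I_{\mathcal Q}}+L_SL_{e_{\mathcal U},\mathcal I_{\mathcal V}}\|u_1-u_2\|_{\mathcal I_{\mathcal V}},$$ where $L_S^2=\lambda_{\max}(\mathcal I_{\mathcal Q}^{-1}B\mathcal I_{\mathcal V}^{-1}B^\top)$.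
   Context: For SPD $M$, $\|x\|_M=(Mx,x)^{1/2}$. *)

From HB Require Import structures.
From mathcomp Require Import all_boot all_order all_algebra.
From mathcomp Require Import all_classical all_reals all_analysis.
Set Implicit Arguments. Unset Strict Implicit. Unset Printing Implicit Defensive.
Import Order.TTheory GRing.Theory Num.Theory.
Import numFieldNormedType.Exports.
Local Open Scope ring_scope.

Section Defs.
Variable R : realType.

Definition qform (k : nat) (M : 'M[R]_k) (x : 'cV[R]_k) : R := (x^T *m (M *m x)) 0 0.

Definition mnorm (k : nat) (M : 'M[R]_k) (x : 'cV[R]_k) : R := Num.sqrt (qform M x).

Definition spd (k : nat) (M : 'M[R]_k) : Prop :=
  M^T = M /\ forall x : 'cV[R]_k, x != 0 -> 0 < qform M x.

Definition is_gradient (k : nat) (f : 'cV[R]_k -> R) (g : 'cV[R]_k -> 'cV[R]_k) : Prop :=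
  forall x, differentiable f x /\ forall v, ('d f x : 'cV[R]_k -> R) v = ((g x)^T *m v) 0 0.

Definition lipschitz_wrt (k l : nat) (M1 : 'M[R]_k) (M2 : 'M[R]_l)
  (phi : 'cV[R]_k -> 'cV[R]_l) (L : R) : Prop :=
  forall x1 x2, mnorm M2 (phi x1 - phi x2) <= L * mnorm M1 (x1 - x2).

Definition is_lambda_max (k : nat) (A : 'M[R]_k) (lam : R) : Prop :=
  eigenvalue A lam /\ forall a, eigenvalue A a -> a <= lam.

End Defs.

From HB Require Import structures.
From mathcomp Require Import all_boot all_order all_algebra.
From mathcomp Require Import all_classical all_reals all_analysis.
From mathcomp Require Import ring lra.
Set Implicit Arguments. Unset Strict Implicit. Unset Printing Implicit Defensive.
Import Order.TTheory GRing.Theory Num.Theory.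
Import numFieldNormedType.Exports.
Local Open Scope ring_scope.

(** The difference [Gu u1 p1 - Gu u2 p2] splits into [- IV^-1 (gfB u1 - gfB u2)],
    whose [IV]-norm is the [IV^-1]-norm of [gfB u1 - gfB u2], and
    [- IV^-1 B^T d] with [d = e_P p1 - e_P p2].  For the latter,
    [||IV^-1 B^T d||_IV^2 = (B IV^-1 B^T d, d) <= LS^2 (IQ d, d)]: the Rayleigh quotient
    [(K y, y) / (M y, y)] of a symmetric [K] against an SPD [M] attains its maximum on the
    compact unit sphere, at a generalised eigenvector [K x = a M x], so the maximum [a] is
    an eigenvalue of [M^-1 K].  The bound on [Gp] is symmetric, using that
    [IV^-1 B^T IQ^-1 B] and [IQ^-1 B IV^-1 B^T] have the same nonzero eigenvalues. *)

Lemma opprD_sub (V : zmodType) (x1 x2 y1 y2 : V) :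
  -(x1 + y1) - -(x2 + y2) = -(x1 - x2) - (y1 - y2).
Proof. by rewrite opprK opprD addrACA !opprB !(addrC (- _)). Qed.

Section QuadraticForms.
Variable R : realType.
Implicit Types (k : nat) (a b c t : R).

Definition bform k (M : 'M[R]_k) (x y : 'cV[R]_k) : R := (x^T *m (M *m y)) 0 0.

Definition psd k (M : 'M[R]_k) : Prop := forall x, 0 <= qform M x.

Lemma qform_bform k (M : 'M[R]_k) x : qform M x = bform M x x.
Proof. by []. Qed.

Lemma bformDl k (M : 'M[R]_k) x y z : bform M (x + y) z = bform M x z + bform M y z.
Proof. by rewrite /bform linearD /= mulmxDl mxE. Qed.

Lemma bformDr k (M : 'M[R]_k) x y z : bform M x (y + z) = bform M x y + bform M x z.
Proof. by rewrite /bform !mulmxDr mxE. Qed.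

Lemma bformZl k (M : 'M[R]_k) a x y : bform M (a *: x) y = a * bform M x y.
Proof. by rewrite /bform linearZ /= -scalemxAl mxE. Qed.

Lemma bformZr k (M : 'M[R]_k) a x y : bform M x (a *: y) = a * bform M x y.
Proof. by rewrite /bform -!scalemxAr mxE. Qed.

Lemma bformC k (M : 'M[R]_k) x y : M^T = M -> bform M x y = bform M y x.
Proof.
move=> sM; rewrite /bform -[in LHS](trmxK (x^T *m _)) [in LHS]mxE.
by rewrite !trmx_mul trmxK sM mulmxA.
Qed.

Lemma bform_delta k (M : 'M[R]_k) i x : bform M (delta_mx i 0) x = (M *m x) i 0.
Proof. by rewrite /bform trmx_delta -rowE mxE. Qed.

Lemma qformDZ k (M : 'M[R]_k) x y t : M^T = M ->
  qform M (x + t *: y) = qform M x + 2 * t * bform M y x + t ^+ 2 * qform M y.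
Proof.
move=> sM; rewrite !qform_bform !bformDl !bformDr !bformZl !bformZr (bformC x y sM).
ring.
Qed.

Lemma qformZ k (M : 'M[R]_k) a x : qform M (a *: x) = a ^+ 2 * qform M x.
Proof. by rewrite !qform_bform bformZl bformZr mulrA expr2. Qed.

Lemma qform0 k (M : 'M[R]_k) : qform M 0 = 0.
Proof. by rewrite -(scale0r 0) qformZ expr0n mul0r. Qed.

Lemma qformN k (M : 'M[R]_k) x : qform M (- x) = qform M x.
Proof. by rewrite -scaleN1r qformZ sqrrN expr1n mul1r. Qed.

Lemma qform_scaleB k (M K : 'M[R]_k) a x :
  qform (a *: M - K) x = a * qform M x - qform K x.
Proof. by rewrite /qform mulmxBl mulmxBr -scalemxAl -scalemxAr !mxE. Qed.

Lemma qform_mulmx k l (M : 'M[R]_k) (P : 'M[R]_(k, l)) d :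
  qform M (P *m d) = qform (P^T *m M *m P) d.
Proof. by rewrite /qform trmx_mul !mulmxA. Qed.

Lemma quadratic_ge0_discr a b c : 0 <= c ->
  (forall t, 0 <= a + 2 * t * b + t ^+ 2 * c) -> b ^+ 2 <= a * c.
Proof.
rewrite le_eqVlt => /orP[/eqP c0 | c_gt0] nonneg.
  suff -> : b = 0 by rewrite -c0 expr0n mulr0.
  have [//|b_neq0] := eqVneq b 0.
  have := nonneg (- (a + 1) / (2 * b)); rewrite -c0 mulr0 addr0.
  have -> : 2 * (- (a + 1) / (2 * b)) * b = - (a + 1) by field.
  lra.
have := nonneg (- b / c).
have -> : a + 2 * (- b / c) * b + (- b / c) ^+ 2 * c = a - b ^+ 2 / c.
  by field; rewrite gt_eqF.
by rewrite subr_ge0 ler_pdivrMr.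
Qed.

Lemma psd_bform_sqr_le k (M : 'M[R]_k) x y : M^T = M -> psd M ->
  bform M x y ^+ 2 <= qform M x * qform M y.
Proof.
move=> sM psdM; rewrite mulrC; apply: quadratic_ge0_discr => // t.
by rewrite -qformDZ.
Qed.

Lemma psd_qform_eq0 k (M : 'M[R]_k) x : M^T = M -> psd M ->
  qform M x = 0 -> M *m x = 0.
Proof.
move=> sM psdM qx0; apply/matrixP => i j; rewrite ord1 [RHS]mxE -bform_delta.
have := psd_bform_sqr_le (delta_mx i 0) x sM psdM; rewrite qx0 mulr0 => sqr_le0.
by apply/eqP; rewrite -sqrf_eq0 eq_le sqr_le0 sqr_ge0.
Qed.

Lemma mnormN k (M : 'M[R]_k) x : mnorm M (- x) = mnorm M x.
Proof. by rewrite /mnorm qformN. Qed.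

Lemma ler_mnormD k (M : 'M[R]_k) x y : M^T = M -> psd M ->
  mnorm M (x + y) <= mnorm M x + mnorm M y.
Proof.
move=> sM psdM; rewrite /mnorm.
have /(_ 1) := qformDZ x y _ sM; rewrite scale1r expr1n mul1r => ->.
rewrite -(ger0_norm (addr_ge0 (sqrtr_ge0 _) (sqrtr_ge0 _))) -sqrtr_sqr.
rewrite ler_sqrt ?sqr_ge0 // sqrrD !sqr_sqrtr // lerD2r lerD2l mulr2n.
suff : bform M y x <= Num.sqrt (qform M x * qform M y) by rewrite sqrtrM //; lra.
apply: le_trans (ler_norm _) _.
by rewrite -sqrtr_sqr ler_sqrt ?mulr_ge0 // (bformC y x sM) psd_bform_sqr_le.
Qed.

Lemma ler_mnormB k (M : 'M[R]_k) x y : M^T = M -> psd M ->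
  mnorm M (x - y) <= mnorm M x + mnorm M y.
Proof. by move=> sM psdM; rewrite -(mnormN M y) ler_mnormD. Qed.

Lemma spd_psd k (M : 'M[R]_k) : spd M -> psd M.
Proof.
move=> [_ posM] x; have [->|x_neq0] := eqVneq x 0; first by rewrite qform0.
exact/ltW/posM.
Qed.

Lemma spd_unitmx k (M : 'M[R]_k) : spd M -> M \in unitmx.
Proof.
move=> [sM posM]; rewrite -row_free_unit -kermx_eq0; apply/negP => /negP ker_neq0.
pose v := nz_row (kermx M).
have vM : v *m M = 0 by apply/sub_kermxP; exact: nz_row_sub.
have : 0 < qform M v^T by apply: posM; rewrite trmx_eq0 nz_row_eq0.
by rewrite /qform trmxK -{1}sM -trmx_mul vM trmx0 mulmx0 mxE ltxx.
Qed.

Lemma spd_invmx_tr k (M : 'M[R]_k) : spd M -> (invmx M)^T = invmx M.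
Proof. by move=> spdM; rewrite trmx_inv spdM.1. Qed.

Lemma mnorm_invmx_mul k (M : 'M[R]_k) w : spd M ->
  mnorm M (invmx M *m w) = mnorm (invmx M) w.
Proof.
move=> spdM; rewrite /mnorm qform_mulmx spd_invmx_tr //.
by rewrite mulVmx ?spd_unitmx ?mul1mx.
Qed.

End QuadraticForms.

Section Rayleigh.
Variable R : realType.

Lemma continuous_qform_row k (K : 'M[R]_k) :
  continuous (fun v : 'rV[R]_k => qform K v^T).
Proof.
have -> : (fun v : 'rV[R]_k => qform K v^T) =
          (fun v => \sum_i (v 0 i * \sum_j (K i j * v 0 j))).
  apply: funext => v; rewrite /qform trmxK [LHS]mxE; apply: eq_bigr => i _.
  by congr (_ * _); rewrite [LHS]mxE; apply: eq_bigr => j _; rewrite mxE.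
have coord_cont i : continuous (fun v : 'rV[R]_k => v 0 i) by exact: coord_continuous.
have row_cont i : continuous (fun v : 'rV[R]_k => \sum_j (K i j * v 0 j)).
  apply: continuous_big => [|j _ v]; first exact: add_continuous.
  by apply: continuousM; [exact: cst_continuous | exact: coord_cont].
apply: continuous_big => [|i _ v]; first exact: add_continuous.
by apply: continuousM; [exact: coord_cont | exact: row_cont].
Qed.

Lemma rayleigh_maximizer k (M K : 'M[R]_k) : (0 < k)%N -> spd M ->
  exists2 x : 'cV[R]_k, x != 0 &
    forall y, y != 0 -> qform K y / qform M y <= qform K x / qform M x.
Proof.
move=> k_gt0 spdM.
pose S := [set v : 'rV[R]_k | `|v| = 1]%classic.
have S_neq0 v : S v -> v != 0 by rewrite /S /= -normr_eq0 => ->; rewrite oner_eq0.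
have S_normalize v : v != 0 -> S (`|v|^-1 *: v).
  by move=> v_neq0; apply: normrZV; rewrite unitfE normr_eq0.
have S_compact : compact S.
  apply: bounded_closed_compact.
    rewrite /bounded_set /= /bounded_near; near=> r => v /= ->; near: r.
    by apply: nbhs_pinfty_ge; rewrite num_real.
  exact: (continuous_closedP _).1 (@norm_continuous _ _) _ (@closed_eq R 1).
have S_nonempty : (S !=set0)%classic.
  pose v0 : 'rV[R]_k := const_mx 1.
  exists (`|v0|^-1 *: v0); apply: S_normalize.
  by apply/eqP => /matrixP /(_ 0 (Ordinal k_gt0)) /eqP; rewrite !mxE oner_eq0.
pose g (v : 'rV[R]_k) := qform K v^T / qform M v^T.
have g_cont : {within S, continuous g}%classic.
  apply: continuous_in_subspaceT => v /[!inE] /S_neq0 v_neq0.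
  apply: (@continuousM _ _ (fun v => qform K v^T)); first exact: continuous_qform_row.
  apply: (@continuousV _ _ (fun v => qform M v^T)); last exact: continuous_qform_row.
  by rewrite gt_eqF // spdM.2 // trmx_eq0.
have [c Sc c_max] := compact_EVT_max S_nonempty S_compact g_cont.
exists c^T => [|y y_neq0]; first by rewrite trmx_eq0 S_neq0 // -inE.
have yT_neq0 : y^T != 0 by rewrite trmx_eq0.
have := c_max _ (mem_set (S_normalize _ yT_neq0)).
rewrite /g linearZ /= trmxK !qformZ -mulf_div divff ?mul1r //.
by rewrite expf_eq0 /= invr_eq0 normr_eq0.
Unshelve. all: by end_near.
Qed.

End Rayleigh.

Section GeneralizedEigen.
Variable R : realType.

Lemma geigen_max k (M K : 'M[R]_k) : (0 < k)%N -> spd M -> K^T = K ->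
  exists S, (forall y, qform K y <= S * qform M y) /\
    exists2 x : 'cV[R]_k, x != 0 & K *m x = S *: (M *m x).
Proof.
move=> k_gt0 spdM sK; have [x x_neq0 x_max] := rayleigh_maximizer K k_gt0 spdM.
have qMx_gt0 : 0 < qform M x := spdM.2 x x_neq0.
pose S := qform K x / qform M x.
have S_bound y : qform K y <= S * qform M y.
  have [->|y_neq0] := eqVneq y 0; first by rewrite !qform0 mulr0.
  by rewrite -ler_pdivrMr ?x_max ?spdM.2.
exists S; split => //; exists x => //.
pose C := S *: M - K.
have sC : C^T = C by rewrite /C linearB linearZ /= sK spdM.1.
have psdC : psd C by move=> z; rewrite qform_scaleB subr_ge0; exact: S_bound.
(* [S M - K] is positive semidefinite and its form vanishes at [x], so it kills [x]. *)
have : C *m x = 0.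
  by apply: psd_qform_eq0 => //; rewrite qform_scaleB divfK ?gt_eqF ?subrr.
by rewrite mulmxBl -scalemxAl => /eqP; rewrite subr_eq0 => /eqP.
Qed.

Lemma qform_le_geigen_bound k (M K : 'M[R]_k) lam : spd M -> K^T = K ->
  (forall a (x : 'cV[R]_k), x != 0 -> K *m x = a *: (M *m x) -> a <= lam) ->
  forall y, qform K y <= lam * qform M y.
Proof.
move=> spdM sK lam_ub y; have [k0|k_gt0] := posnP k.
  by subst k; rewrite (flatmx0 y) !qform0 mulr0.
have [S [S_bound [x x_neq0 Kx]]] := geigen_max k_gt0 spdM sK.
apply: le_trans (S_bound y) _.
by apply: ler_wpM2r; [exact: spd_psd | exact: lam_ub Kx].
Qed.

Lemma col_eigenvalue k (A : 'M[R]_k) a (w : 'cV[R]_k) :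
  A *m w = a *: w -> w != 0 -> eigenvalue A a.
Proof.
move=> Aw w_neq0; rewrite /eigenvalue /eigenspace kermx_eq0 row_free_unit.
apply: contra w_neq0 => unitA.
have : (A - a%:M) *m w = 0 by rewrite mulmxBl Aw mul_scalar_mx subrr.
by move=> /(congr1 (mulmx (invmx (A - a%:M)))); rewrite mulKmx // mulmx0 => ->.
Qed.

Lemma eigenvalue_mulmxC k l (X : 'M[R]_(k, l)) (Y : 'M[R]_(l, k)) a : a != 0 ->
  eigenvalue (X *m Y) a -> eigenvalue (Y *m X) a.
Proof.
move=> a_neq0 /eigenvalueP[v vXY v_neq0]; apply/eigenvalueP; exists (v *m X).
  by rewrite mulmxA -(mulmxA v) vXY -scalemxAl.
apply: contraNneq v_neq0 => vX0.
by rewrite -(scalerK a_neq0 v) -vXY mulmxA vX0 mul0mx scaler0.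
Qed.

Lemma mnorm_invmx_mul_le k l (M : 'M[R]_k) (N : 'M[R]_l) (C : 'M[R]_(k, l)) L d :
  spd M -> spd N -> 0 <= L ->
  (forall a, eigenvalue (invmx N *m C^T *m invmx M *m C) a -> a <= L ^+ 2) ->
  mnorm M (invmx M *m C *m d) <= L * mnorm N d.
Proof.
move=> spdM spdN L_ge0 eig_ub.
have KE : (invmx M *m C)^T *m M *m (invmx M *m C) = C^T *m invmx M *m C.
  by rewrite trmx_mul spd_invmx_tr // -!mulmxA mulKmx ?spd_unitmx.
have sK : (C^T *m invmx M *m C)^T = C^T *m invmx M *m C.
  by rewrite !trmx_mul trmxK spd_invmx_tr // mulmxA.
rewrite /mnorm qform_mulmx KE -(ger0_norm L_ge0) -sqrtr_sqr -sqrtrM ?sqr_ge0 //.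
rewrite ler_sqrt ?mulr_ge0 ?sqr_ge0 ?spd_psd //.
apply: qform_le_geigen_bound sK _ d => // a x x_neq0 Kx.
apply/eig_ub/(col_eigenvalue _ x_neq0).
by move: Kx; rewrite -!mulmxA => ->; rewrite -scalemxAr mulKmx ?spd_unitmx.
Qed.

End GeneralizedEigen.

Unset Implicit Arguments. Set Strict Implicit.
Theorem lemma5p4 (R : realType) (m n : nat) (B : 'M[R]_(n, m))
  (TU IV : 'M[R]_m) (TP IQ : 'M[R]_n)
  (f : 'cV[R]_m -> R) (h : 'cV[R]_n -> R)
  (gf : 'cV[R]_m -> 'cV[R]_m) (gh : 'cV[R]_n -> 'cV[R]_n)
  (gfB : 'cV[R]_m -> 'cV[R]_m) (ghB : 'cV[R]_n -> 'cV[R]_n)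
  (LfB LhB LeU LeP LS : R) :
  spd TU -> spd IV -> spd TP -> spd IQ ->
  is_gradient f gf -> is_gradient h gh ->
  (* f_B(u) = f(u) + 1/2 (B^T T_P^{-1} B u, u), gfB its gradient *)
  is_gradient (fun u => f u + 2^-1 * qform (B^T *m invmx TP *m B) u) gfB ->
  (* h_B(p) = h(p) + 1/2 (B T_U^{-1} B^T p, p), ghB its gradient *)
  is_gradient (fun p => h p + 2^-1 * qform (B *m invmx TU *m B^T) p) ghB ->
  lipschitz_wrt IV (invmx IV) gfB LfB ->
  lipschitz_wrt IQ (invmx IQ) ghB LhB ->
  lipschitz_wrt IV IV (fun u => u - invmx TU *m gf u) LeU ->
  lipschitz_wrt IQ IQ (fun p => p - invmx TP *m gh p) LeP ->
  0 <= LS -> is_lambda_max (invmx IQ *m B *m invmx IV *m B^T) (LS ^+ 2) ->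
  let Gu := fun u p => - (invmx IV *m (gfB u + B^T *m (p - invmx TP *m gh p))) in
  let Gp := fun u p => - (invmx IQ *m (ghB p - B *m (u - invmx TU *m gf u))) in
  forall (u1 u2 : 'cV[R]_m) (p1 p2 : 'cV[R]_n),
    mnorm IV (Gu u1 p1 - Gu u2 p2)
      <= LfB * mnorm IV (u1 - u2) + LS * LeP * mnorm IQ (p1 - p2) /\
    mnorm IQ (Gp u1 p1 - Gp u2 p2)
      <= LhB * mnorm IQ (p1 - p2) + LS * LeU * mnorm IV (u1 - u2).
Proof.
move=> _ spdIV _ spdIQ _ _ _ _ gfB_lip ghB_lip eU_lip eP_lip LS_ge0 [_ LS_max] Gu Gp u1 u2 p1 p2.
split.
- rewrite /Gu !(mulmxDr (invmx IV)) opprD_sub -!mulmxBr mulmxA.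
  apply: le_trans (ler_mnormB _ _ spdIV.1 (spd_psd spdIV)) _.
  rewrite mnormN mnorm_invmx_mul // -mulrA; apply: lerD; first exact: gfB_lip.
  apply: le_trans (mnorm_invmx_mul_le _ spdIV spdIQ LS_ge0 _) _.
    by move=> a; rewrite trmxK => /LS_max.
  by rewrite ler_wpM2l // eP_lip.
- rewrite /Gp !(mulmxBr (invmx IQ)) opprD_sub.
  apply: le_trans (ler_mnormB _ _ spdIQ.1 (spd_psd spdIQ)) _.
  rewrite -opprD !mnormN -!mulmxBr mulmxA mnorm_invmx_mul // -mulrA; apply: lerD; first exact: ghB_lip.
  apply: le_trans (mnorm_invmx_mul_le _ spdIQ spdIV LS_ge0 _) _.
    move=> a; have [a_le0|a_gt0] := lerP a 0; first by move=> _; exact: le_trans a_le0 (sqr_ge0 LS).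
    by rewrite -mulmxA => /(eigenvalue_mulmxC (lt0r_neq0 a_gt0)); rewrite mulmxA => /LS_max.
  by rewrite ler_wpM2l // eU_lip.
Qed.
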